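(* Let $(X_+,X_-)$ be a Euclidean twin building, $(\Sigma_+,\Sigma_-)$ a twin apartment with identifications $\iota_\pm\colon\Sigma_\pm\to\mathbb{E}$, and let $h$ be the height function associated with a finite set $D$ that is $W$-invariant, satisfies $D=-D$, and is rich. Let $\sigma_+\subseteq\Sigma_+$ and $\sigma_-\subseteq\Sigma_-$ be cells and suppose there is a wall $H$ of $\mathbb{E}$ containing $\iota_+(\sigma_+)$ and $\iota_-(\sigma_-)$. Let $r_H$ be the reflection of $\mathbb{E}$ in $H$. Then for all $x_+\in\mathrm{St}(\sigma_+)\cap\Sigma_+$ and $x_-\in\mathrm{St}(\sigma_-)\cap\Sigma_-$ one has $h(\iota_+^{-1}r_H\iota_+(x_+),x_-)=h(x_+,x_-)$. The same holds with the roles of $+$ and $-$ interchanged.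
   Context: Let $W$ be the finite Weyl group of the buildings at infinity, acting linearly on a Euclidean vector space $\mathbb{E}$; the twin apartment is identified with $\mathbb{E}$ via isometries $\iota_\pm\colon\Sigma_\pm\to\mathbb{E}$ compatible with the Coxeter complex structures and with $\iota_+(x)=\iota_-(\mathrm{op}\,x)$ for the opposition bijection $\mathrm{op}\colon\Sigma_+\to\Sigma_-$; walls of $\mathbb{E}$ are the images of walls of $\Sigma_\pm$ (the two structures agree). $\mathrm{St}(\sigma)$ is the closed star of $\sigma$ (all cells containing $\sigma$ and their faces). $Z=Z((D+D)\cup D)$ with $Z(E)=\sum_{z\in E}[0,z]$ (Minkowski sum), and $h(x_+,x_-)=\mathrm{dist}(\iota_+(x_+)-\iota_-(x_-),Z)$. $D$ is rich if it contains $\iota_+(v)-\iota_+(w)$ for any two distinct vertices $v,w$ of any apartment $\Sigma_+$ of $X_+$ that lie in a common closed star of a cell (i.e. are joined by a path of at most two edges). *)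

From Stdlib Require Import Reals List ZArith ClassicalEpsilon.
From Stdlib Require Fin.
Open Scope R_scope.

Definition vec (n : nat) := Fin.t n -> R.

Fixpoint fsum (n : nat) : (Fin.t n -> R) -> R :=
  match n return (Fin.t n -> R) -> R with
  | O => fun _ => 0
  | S m => fun f => f Fin.F1 + fsum m (fun i => f (Fin.FS i))
  end.

Definition vzero {n} : vec n := fun _ => 0.
Definition vadd {n} (x y : vec n) : vec n := fun i => x i + y i.
Definition vopp {n} (x : vec n) : vec n := fun i => - x i.
Definition vsub {n} (x y : vec n) : vec n := vadd x (vopp y).
Definition vscale {n} (c : R) (x : vec n) : vec n := fun i => c * x i.
Definition dot {n} (x y : vec n) : R := fsum n (fun i => x i * y i).
Definition vnorm {n} (x : vec n) : R := sqrt (dot x x).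

Definition lin_refl {n} (a x : vec n) : vec n :=
  vsub x (vscale (2 * dot x a / dot a a) a).

(** It is given by a (possibly non-reduced) crystallographic root system
    [Phi] spanning E and a special point [o]: the walls are the affine
    hyperplanes H_{a,k} = { x | <a, x - o> = k }, a in Phi, k in Z. *)
Definition is_root_system {n} (Phi : list (vec n)) : Prop :=
  (forall a, In a Phi -> a <> vzero) /\
  (forall a b, In a Phi -> In b Phi -> In (lin_refl a b) Phi) /\
  (forall a b, In a Phi -> In b Phi ->
     exists m : Z, 2 * dot b a / dot a a = IZR m) /\
  (forall x : vec n, (forall a, In a Phi -> dot a x = 0) -> x = vzero).

Definition in_W {n} (Phi : list (vec n)) (f : vec n -> vec n) : Prop :=
  exists l : list (vec n), Forall (fun a => In a Phi) l /\
    forall x, f x = fold_right lin_refl x l.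

Definition on_wall {n} (o a : vec n) (k : Z) (x : vec n) : Prop :=
  dot a (vsub x o) = IZR k.

Definition aff_refl {n} (o a : vec n) (k : Z) (x : vec n) : vec n :=
  vsub x (vscale (2 * (dot a (vsub x o) - IZR k) / dot a a) a).

Definition same_cell {n} (Phi : list (vec n)) (o : vec n) (x y : vec n) : Prop :=
  forall a (k : Z), In a Phi ->
    (dot a (vsub x o) < IZR k <-> dot a (vsub y o) < IZR k) /\
    (dot a (vsub x o) = IZR k <-> dot a (vsub y o) = IZR k).

Definition is_cell {n} (Phi : list (vec n)) (o : vec n) (c : vec n -> Prop) : Prop :=
  exists x, forall y, c y <-> same_cell Phi o x y.

Definition in_closure {n} (S : vec n -> Prop) (y : vec n) : Prop :=
  forall eps, 0 < eps -> exists z, S z /\ vnorm (vsub y z) < eps.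

Definition is_face {n} (s t : vec n -> Prop) : Prop :=
  forall x, s x -> in_closure t x.

Definition in_star {n} (Phi : list (vec n)) (o : vec n) (s : vec n -> Prop)
  (x : vec n) : Prop :=
  exists t r, is_cell Phi o t /\ is_face s t /\
              is_cell Phi o r /\ is_face r t /\ r x.

Definition is_vertex {n} (Phi : list (vec n)) (o : vec n) (v : vec n) : Prop :=
  is_cell Phi o (fun y => y = v).

Definition image {n} {S : Type} (i : S -> vec n) (s : S -> Prop) : vec n -> Prop :=
  fun y => exists x, s x /\ i x = y.

Definition S_cell {n} {S : Type} (Phi : list (vec n)) (o : vec n)
  (i : S -> vec n) (s : S -> Prop) : Prop := is_cell Phi o (image i s).

Definition S_star {n} {S : Type} (Phi : list (vec n)) (o : vec n)
  (i : S -> vec n) (s : S -> Prop) (x : S) : Prop := in_star Phi o (image i s) (i x).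

Definition S_vertex {n} {S : Type} (Phi : list (vec n)) (o : vec n)
  (i : S -> vec n) (v : S) : Prop := is_vertex Phi o (i v).

Definition W_invariant {n} (Phi : list (vec n)) (D : list (vec n)) : Prop :=
  forall f, in_W Phi f -> forall d, In d D -> In (f d) D.

Definition symmetric_set {n} (D : list (vec n)) : Prop :=
  forall d, In d D -> In (vopp d) D.

(** Richness, stated for the apartment Sigma_+ with identification iota_+. *)
Definition rich {n} {S : Type} (Phi : list (vec n)) (o : vec n)
  (i : S -> vec n) (D : list (vec n)) : Prop :=
  forall (s : S -> Prop) (v w : S),
    S_cell Phi o i s -> S_vertex Phi o i v -> S_vertex Phi o i w -> v <> w ->
    S_star Phi o i s v -> S_star Phi o i s w -> In (vsub (i v) (i w)) D.

Definition DDuD {n} (D : list (vec n)) (z : vec n) : Prop :=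
  In z D \/ exists d1 d2, In d1 D /\ In d2 D /\ z = vadd d1 d2.

Definition in_zonotope {n} (S : vec n -> Prop) (v : vec n) : Prop :=
  exists L : list (vec n), NoDup L /\ (forall z, In z L <-> S z) /\
  exists t : vec n -> R, (forall z, 0 <= t z <= 1) /\
    v = fold_right (fun z acc => vadd (vscale (t z) z) acc) vzero L.

Definition is_inf (A : R -> Prop) (m : R) : Prop :=
  (forall r, A r -> m <= r) /\ (forall m', (forall r, A r -> m' <= r) -> m' <= m).

Definition dist_set {n} (v : vec n) (Z : vec n -> Prop) : R :=
  epsilon (inhabits 0)
    (fun m => is_inf (fun r => exists z, Z z /\ r = vnorm (vsub v z)) m).

Definition height {n} {Sp Sm : Type} (D : list (vec n))
  (ip : Sp -> vec n) (im : Sm -> vec n) (xp : Sp) (xm : Sm) : R :=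
  dist_set (vsub (ip xp) (im xm)) (in_zonotope (DDuD D)).

From Stdlib Require Import Reals List ZArith.
From Stdlib Require Import ClassicalEpsilon Classical FunctionalExtensionality Lra Lia Permutation Wf_nat.
Open Scope R_scope.

(* Write [l(x) = <a, x - o> - k], so that [H = {l = 0}] and [r_H] moves [x] by
   [-2 l(x) a / <a,a>].  The cells of the closed star of a cell in [H] have it in
   their closure, so they lie strictly between the walls [l = -1] and [l = 1]; hence
   for [x_+, x_-] in the stars, [u = i_+ x_+ - i_- x_-] and its image after reflecting
   either point lie in the slab [|<a,u>| <= 2] and differ by a multiple of [a].

   A coweight [c] with [<a,c> <> 0] minimising [sum_b <b,c>^2] has [|<b,c>| <= 2] for
   every root [b] (else subtracting [b^v] or [2 b^v] decreases the sum).  Then [o] and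
   [o + c] are vertices in the closed star of the cell of [o + c/2], so [c] is in [D] by
   richness, and [|<c,a>| >= 1].  By W-invariance and [D = -D], the vectors
   [+/- (c - s_a c)], multiples of [a] with [|<a,.>| = 2 |<c,a>| >= 2], lie in [D + D].
   Averaging weights over [s_a] shows that the zonotope contains, over the orthogonal
   projection of each of its points, the segment of direction [a] inside that slab.
   So on the slab the distance to [Z] only depends on the component orthogonal to [a],
   and the height is unchanged. *)

Ltac vec_ext := apply functional_extensionality; intro.
Ltac vec_ring := vec_ext; unfold vsub, vadd, vscale, vopp, vzero; ring.

Lemma fsum_ext n (f g : Fin.t n -> R) : (forall i, f i = g i) -> fsum n f = fsum n g.
Proof.
  induction n; simpl; intros H; auto.
  now rewrite H, (IHn (fun i => f (Fin.FS i)) (fun i => g (Fin.FS i))).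
Qed.

Lemma fsum_add n (f g : Fin.t n -> R) : fsum n (fun i => f i + g i) = fsum n f + fsum n g.
Proof.
  induction n; simpl; [ring|].
  rewrite (IHn (fun i => f (Fin.FS i)) (fun i => g (Fin.FS i))); ring.
Qed.

Lemma fsum_scal n c (f : Fin.t n -> R) : fsum n (fun i => c * f i) = c * fsum n f.
Proof. induction n; simpl; [ring|]. rewrite (IHn (fun i => f (Fin.FS i))); ring. Qed.

Lemma fsum_nonneg n (f : Fin.t n -> R) : (forall i, 0 <= f i) -> 0 <= fsum n f.
Proof.
  induction n; simpl; intros H; [lra|].
  pose proof (H Fin.F1); pose proof (IHn (fun i => f (Fin.FS i)) (fun i => H _)); lra.
Qed.

Lemma fsum_eq0_inv n (f : Fin.t n -> R) :
  (forall i, 0 <= f i) -> fsum n f = 0 -> forall i, f i = 0.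
Proof.
  induction n; simpl; intros H E i; [inversion i|].
  pose proof (H Fin.F1); pose proof (fsum_nonneg _ (fun i => f (Fin.FS i)) (fun i => H _)).
  pattern i; apply (@Fin.caseS' n i); [lra|].
  intro p; apply (IHn (fun i => f (Fin.FS i))); auto; lra.
Qed.

Section Dot.
Context {n : nat}.
Implicit Types (x y z b v : vec n).

Lemma dot_comm x y : dot x y = dot y x.
Proof. unfold dot; apply fsum_ext; intros; ring. Qed.

Lemma dot_add_r x y z : dot x (vadd y z) = dot x y + dot x z.
Proof. unfold dot, vadd; rewrite <- fsum_add; apply fsum_ext; intros; ring. Qed.

Lemma dot_scale_r c x y : dot x (vscale c y) = c * dot x y.
Proof. unfold dot, vscale; rewrite <- fsum_scal; apply fsum_ext; intros; ring. Qed.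

Lemma dot_add_l x y z : dot (vadd y z) x = dot y x + dot z x.
Proof. rewrite dot_comm, dot_add_r, (dot_comm x y), (dot_comm x z); auto. Qed.

Lemma dot_scale_l c x y : dot (vscale c y) x = c * dot y x.
Proof. rewrite dot_comm, dot_scale_r, dot_comm; auto. Qed.

Lemma dot_opp_r x y : dot x (vopp y) = - dot x y.
Proof. replace (vopp y) with (vscale (-1) y) by vec_ring; rewrite dot_scale_r; ring. Qed.

Lemma dot_opp_l x y : dot (vopp y) x = - dot y x.
Proof. rewrite dot_comm, dot_opp_r, dot_comm; auto. Qed.

Lemma dot_sub_r x y z : dot x (vsub y z) = dot x y - dot x z.
Proof. unfold vsub; rewrite dot_add_r, dot_opp_r; ring. Qed.

Lemma dot_sub_l x y z : dot (vsub y z) x = dot y x - dot z x.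
Proof. unfold vsub; rewrite dot_add_l, dot_opp_l; ring. Qed.

Lemma dot_zero_r x : dot x vzero = 0.
Proof. replace (@vzero n) with (vscale 0 x) by vec_ring; rewrite dot_scale_r; ring. Qed.

Lemma dot_self_ge0 x : 0 <= dot x x.
Proof. unfold dot; apply fsum_nonneg; intros; apply Rle_0_sqr. Qed.

Lemma dot_self_gt0 x : x <> vzero -> 0 < dot x x.
Proof.
  intros Hx; destruct (dot_self_ge0 x) as [|E]; auto.
  exfalso; apply Hx; vec_ext; unfold vzero.
  pose proof (fsum_eq0_inv n (fun i => x i * x i) (fun i => Rle_0_sqr _) (eq_sym E) x0).
  simpl in *; nra.
Qed.

Lemma vnorm_ge0 x : 0 <= vnorm x.
Proof. apply sqrt_pos. Qed.

Lemma vnorm_le x y : dot x x <= dot y y -> vnorm x <= vnorm y.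
Proof. intros; apply sqrt_le_1_alt; auto. Qed.

Lemma vnorm_lt_sqr x e : vnorm x < e -> dot x x < e * e.
Proof.
  unfold vnorm; intros H; pose proof (dot_self_ge0 x); pose proof (sqrt_pos (dot x x)).
  rewrite <- (sqrt_sqrt (dot x x)) by auto; nra.
Qed.

Lemma vnorm_scale c x : 0 <= c -> vnorm (vscale c x) = c * vnorm x.
Proof.
  intros; unfold vnorm.
  rewrite dot_scale_l, dot_scale_r, <- Rmult_assoc, sqrt_mult_alt by nra.
  rewrite sqrt_square; auto.
Qed.

(* From [<l b -/+ v, l b -/+ v> >= 0]; used instead of Cauchy-Schwarz. *)
Lemma dot_amgm b v l : 0 < l -> 2 * Rabs (dot b v) <= l * dot b b + dot v v / l.
Proof.
  intros Hl.
  pose proof (dot_self_ge0 (vsub (vscale l b) v)) as Hm.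
  pose proof (dot_self_ge0 (vadd (vscale l b) v)) as Hp.
  rewrite !dot_sub_l, !dot_sub_r, !dot_add_l, !dot_add_r, !dot_scale_l, !dot_scale_r,
    (dot_comm v b) in *.
  assert (Hl' : 0 < / l) by now apply Rinv_0_lt_compat.
  unfold Rdiv.
  assert (l * dot b b + 2 * dot b v + dot v v * / l
          = (l * l * dot b b + 2 * l * dot b v + dot v v) * / l) by (field; lra).
  assert (l * dot b b - 2 * dot b v + dot v v * / l
          = (l * l * dot b b - 2 * l * dot b v + dot v v) * / l) by (field; lra).
  assert (0 <= (l * l * dot b b + 2 * l * dot b v + dot v v) * / l) by (apply Rmult_le_pos; nra).
  assert (0 <= (l * l * dot b b - 2 * l * dot b v + dot v v) * / l) by (apply Rmult_le_pos; nra).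
  unfold Rabs; destruct (Rcase_abs (dot b v)); lra.
Qed.

End Dot.

Lemma nodup_enumeration {A} (l : list A) : exists L, NoDup L /\ forall x, In x L <-> In x l.
Proof.
  exists (nodup (fun x y => excluded_middle_informative (x = y)) l).
  split; [apply NoDup_nodup | intros; apply nodup_In].
Qed.

Lemma Permutation_map_involution {A} (L : list A) f : NoDup L ->
  (forall x, In x L -> In (f x) L) -> (forall x, f (f x) = x) -> Permutation L (map f L).
Proof.
  intros Hnd Hin Hf; apply NoDup_Permutation; auto.
  - apply FinFun.Injective_map_NoDup; auto.
    intros x y E; rewrite <- (Hf x), <- (Hf y), E; auto.
  - intros x; rewrite in_map_iff; split.
    + intros Hx; exists (f x); auto.
    + intros [y [<- Hy]]; auto.
Qed.

Definition lsum {A} (L : list A) (f : A -> R) : R := fold_right (fun x acc => f x + acc) 0 L.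

Section ListSums.
Context {A : Type}.
Implicit Types (L : list A) (f g : A -> R).

Lemma lsum_perm L1 L2 f : Permutation L1 L2 -> lsum L1 f = lsum L2 f.
Proof. induction 1; simpl; auto; lra. Qed.

Lemma lsum_map {B} L (h : A -> B) (f : B -> R) : lsum (map h L) f = lsum L (fun x => f (h x)).
Proof. induction L; simpl; auto; rewrite IHL; auto. Qed.

Lemma lsum_add L f g : lsum L (fun x => f x + g x) = lsum L f + lsum L g.
Proof. induction L; simpl; [ring|]; rewrite IHL; ring. Qed.

Lemma lsum_scal L c f : lsum L (fun x => c * f x) = c * lsum L f.
Proof. induction L; simpl; [ring|]; rewrite IHL; ring. Qed.

Lemma lsum_ext L f g : (forall x, In x L -> f x = g x) -> lsum L f = lsum L g.
Proof. induction L; simpl; intros H; auto; rewrite H, IHL; auto. Qed.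

Lemma lsum_nonneg L f : (forall y, In y L -> 0 <= f y) -> 0 <= lsum L f.
Proof.
  induction L as [|y L IH]; simpl; intros H; [lra|].
  pose proof (H y (or_introl eq_refl)); pose proof (IH (fun z h => H z (or_intror h))); lra.
Qed.

Lemma lsum_ge_mem L f x : (forall y, In y L -> 0 <= f y) -> In x L -> f x <= lsum L f.
Proof.
  induction L as [|y L IH]; simpl; intros H Hx; [contradiction|].
  pose proof (H y (or_introl eq_refl)).
  pose proof (lsum_nonneg L f (fun z h => H z (or_intror h))).
  destruct Hx as [<-|Hx]; [lra|].
  pose proof (IH (fun z h => H z (or_intror h)) Hx); lra.
Qed.

End ListSums.

Definition vsum {n A} (L : list A) (F : A -> vec n) : vec n :=
  fold_right (fun x acc => vadd (F x) acc) vzero L.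

Section VectorSums.
Context {n : nat} {A : Type}.
Implicit Types (L : list A) (F G : A -> vec n).

Lemma vsum_perm L1 L2 F : Permutation L1 L2 -> vsum L1 F = vsum L2 F.
Proof. induction 1; simpl; auto; try congruence; vec_ring. Qed.

Lemma vsum_map {B} L (h : A -> B) (F : B -> vec n) : vsum (map h L) F = vsum L (fun x => F (h x)).
Proof. induction L; simpl; auto; rewrite IHL; auto. Qed.

Lemma vsum_add L F G : vsum L (fun x => vadd (F x) (G x)) = vadd (vsum L F) (vsum L G).
Proof. induction L; simpl; [vec_ring|]; rewrite IHL; vec_ring. Qed.

Lemma vsum_scale L c F : vsum L (fun x => vscale c (F x)) = vscale c (vsum L F).
Proof. induction L; simpl; [vec_ring|]; rewrite IHL; vec_ring. Qed.

Lemma vsum_ext L F G : (forall x, In x L -> F x = G x) -> vsum L F = vsum L G.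
Proof. induction L; simpl; intros H; auto; rewrite H, IHL; auto. Qed.

Lemma vsum_zero L F : (forall x, In x L -> F x = vzero) -> vsum L F = vzero.
Proof. induction L; simpl; intros H; auto; rewrite H, IHL; auto; vec_ring. Qed.

Lemma vsum_single L F e : NoDup L -> In e L -> (forall x, x <> e -> F x = vzero) ->
  vsum L F = F e.
Proof.
  induction L as [|y L IH]; simpl; intros Hnd He H; [contradiction|]; inversion Hnd; subst.
  destruct (classic (y = e)) as [<-|Hne].
  - rewrite vsum_zero; [vec_ring|]; intros x Hx; apply H; intros ->; contradiction.
  - rewrite H by auto; destruct He as [He|He]; [contradiction|]; rewrite IH; auto; vec_ring.
Qed.

Lemma vsum_additive L F (f : vec n -> vec n) : f vzero = vzero ->
  (forall x y, f (vadd x y) = vadd (f x) (f y)) -> f (vsum L F) = vsum L (fun x => f (F x)).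
Proof. intros H0 Ha; induction L; simpl; auto; rewrite Ha, IHL; auto. Qed.

End VectorSums.

Section Reflections.
Context {n : nat}.
Implicit Types (a x y : vec n).
Ltac refl_field := vec_ext; unfold lin_refl, vsub, vadd, vscale, vopp, vzero; field; auto.

Lemma lin_refl_add a x y : lin_refl a (vadd x y) = vadd (lin_refl a x) (lin_refl a y).
Proof. unfold lin_refl; rewrite dot_add_l; vec_ext; unfold vsub, vadd, vscale, vopp, Rdiv; ring. Qed.

Lemma lin_refl_zero a : lin_refl a vzero = vzero.
Proof.
  unfold lin_refl; rewrite dot_comm, dot_zero_r.
  vec_ext; unfold vsub, vadd, vscale, vopp, vzero, Rdiv; ring.
Qed.

Lemma lin_refl_scale a x c : lin_refl a (vscale c x) = vscale c (lin_refl a x).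
Proof. unfold lin_refl; rewrite dot_scale_l; vec_ext; unfold vsub, vadd, vscale, vopp, Rdiv; ring. Qed.

Lemma lin_refl_dot a x : dot a a <> 0 -> dot (lin_refl a x) a = - dot x a.
Proof. intros; unfold lin_refl; rewrite dot_sub_l, dot_scale_l; field; auto. Qed.

Lemma lin_refl_involutive a x : dot a a <> 0 -> lin_refl a (lin_refl a x) = x.
Proof. intros H; unfold lin_refl at 1; rewrite lin_refl_dot by auto; refl_field. Qed.

Lemma lin_refl_adjoint a x y : dot (lin_refl a x) y = dot x (lin_refl a y).
Proof.
  unfold lin_refl; rewrite dot_sub_l, dot_sub_r, dot_scale_l, dot_scale_r, (dot_comm a y).
  unfold Rdiv; ring.
Qed.

Lemma lin_refl_orthogonal a x : dot x a = 0 -> lin_refl a x = x.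
Proof. intros H; unfold lin_refl; rewrite H; vec_ext; unfold vsub, vadd, vscale, vopp, Rdiv; ring. Qed.

Lemma lin_refl_parallel a c : dot a a <> 0 -> lin_refl a (vscale c a) = vscale (- c) a.
Proof. intros H; unfold lin_refl; rewrite dot_scale_l; refl_field. Qed.

End Reflections.

(** * Short coweights *)

Section ShortCoweight.
Context {n : nat} (Phi : list (vec n)).
Hypothesis HPhi : is_root_system Phi.
Implicit Types (a b c x y : vec n).

Definition coweight c : Prop := forall b, In b Phi -> exists m : Z, dot b c = IZR m.

Definition short_coweight c : Prop :=
  forall b, In b Phi -> exists m : Z, dot b c = IZR m /\ (-2 <= m <= 2)%Z.

Definition coroot b : vec n := vscale (2 / dot b b) b.

Lemma root_dot_self_neq0 b : In b Phi -> dot b b <> 0.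
Proof. intros Hb; destruct HPhi as [Hnz _]; pose proof (dot_self_gt0 b (Hnz b Hb)); lra. Qed.

Lemma dot_coroot_self b : In b Phi -> dot b (coroot b) = 2.
Proof.
  intros Hb; pose proof (root_dot_self_neq0 b Hb).
  unfold coroot; rewrite dot_scale_r; field; auto.
Qed.

Lemma coroot_coweight b : In b Phi -> coweight (coroot b).
Proof.
  intros Hb x Hx; destruct HPhi as [_ [_ [Hcr _]]]; destruct (Hcr b x Hb Hx) as [m Hm].
  exists m; unfold coroot; rewrite dot_scale_r, <- Hm; unfold Rdiv; ring.
Qed.

Lemma coweight_sub_mul c y (m : Z) : coweight c -> coweight y ->
  coweight (vsub c (vscale (IZR m) y)).
Proof.
  intros Hc Hy b Hb; destruct (Hc b Hb) as [z1 H1], (Hy b Hb) as [z2 H2].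
  exists (z1 - m * z2)%Z; rewrite dot_sub_r, dot_scale_r, H1, H2, minus_IZR, mult_IZR; ring.
Qed.

Section Quadratic.
Variable L : list (vec n).
Hypothesis HLnd : NoDup L.
Hypothesis HL : forall b, In b L <-> In b Phi.

Definition quad x : R := lsum L (fun b => dot b x * dot b x).

Lemma quad_coweight_nat x : coweight x -> exists N, quad x = INR N.
Proof.
  intros Hx; unfold quad; assert (HLP : forall b, In b L -> In b Phi) by apply HL.
  clear HLnd HL; induction L as [|b L' IH]; [exists 0%nat; reflexivity|].
  destruct IH as [N HN]; [intros; apply HLP; simpl; auto|].
  destruct (Hx b (HLP b (or_introl eq_refl))) as [z Hz].
  exists (Z.to_nat (z * z) + N)%nat; simpl; rewrite HN, plus_INR, Hz.
  rewrite (INR_IZR_INZ (Z.to_nat _)), Z2Nat.id, mult_IZR by nia; ring.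
Qed.

(* The summand changes sign under [s_b], which permutes [L]. *)
Lemma quad_cross_coroot_eq0 b x : In b Phi -> dot x b = 0 ->
  lsum L (fun b' => dot b' x * dot b' (coroot b)) = 0.
Proof.
  intros Hb Hxb; pose proof (root_dot_self_neq0 b Hb) as Hbb.
  destruct HPhi as [_ [Hcl _]].
  assert (Hperm : Permutation L (map (lin_refl b) L)).
  { apply Permutation_map_involution; auto.
    - intros y Hy; apply HL, Hcl, HL; auto.
    - intros; apply lin_refl_involutive; auto. }
  assert (Hflip : forall y, dot (lin_refl b y) x * dot (lin_refl b y) (coroot b)
                            = - (dot y x * dot y (coroot b))).
  { intros y; rewrite !lin_refl_adjoint, lin_refl_orthogonal by auto.
    unfold coroot; rewrite lin_refl_parallel, !dot_scale_r by auto; ring. }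
  assert (E : lsum L (fun b' => dot b' x * dot b' (coroot b))
              = - lsum L (fun b' => dot b' x * dot b' (coroot b))).
  { rewrite (lsum_perm _ _ _ Hperm) at 1; rewrite lsum_map.
    transitivity (lsum L (fun y => -1 * (dot y x * dot y (coroot b)))).
    - apply lsum_ext; intros y _; rewrite Hflip; ring.
    - rewrite lsum_scal; ring. }
  lra.
Qed.

Lemma quad_sub_coroot b c mu : In b Phi ->
  quad (vsub c (vscale mu (coroot b))) = quad c + (mu * mu - mu * dot b c) * quad (coroot b).
Proof.
  intros Hb; set (y := coroot b).
  set (cp := vsub c (vscale (dot b c / 2) y)).
  assert (Hcp : dot cp b = 0).
  { unfold cp, y; rewrite dot_sub_l, dot_scale_l, (dot_comm (coroot b)), dot_coroot_self,
      (dot_comm c) by auto; field. }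
  pose proof (quad_cross_coroot_eq0 b cp Hb Hcp) as Hcross; fold y in Hcross.
  unfold quad.
  transitivity (lsum L (fun x => dot x c * dot x c + (-2 * mu) * (dot x cp * dot x y)
                                 + (mu * mu - mu * dot b c) * (dot x y * dot x y))).
  - apply lsum_ext; intros x _; unfold cp; rewrite !dot_sub_r, !dot_scale_r; field.
  - rewrite !lsum_add, !lsum_scal, Hcross; ring.
Qed.

Lemma quad_coroot_ge4 b : In b Phi -> 4 <= quad (coroot b).
Proof.
  intros Hb; unfold quad.
  pose proof (lsum_ge_mem L (fun x => dot x (coroot b) * dot x (coroot b)) b
                (fun x _ => Rle_0_sqr _) (proj2 (HL b) Hb)) as H.
  simpl in H; rewrite dot_coroot_self in H by auto; lra.
Qed.

(* Subtracting [b^v] or [2 b^v] (with the sign of [<b,c>]) decreases [quad]; one of the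
   two keeps [<a, c> <> 0]. *)
Lemma coweight_reduce a b c (m : Z) : coweight c -> dot a c <> 0 -> In b Phi ->
  dot b c = IZR m -> (3 <= Z.abs m)%Z ->
  exists c', coweight c' /\ dot a c' <> 0 /\ quad c' < quad c.
Proof.
  intros Hc Hac Hb Hm Hm3.
  assert (Hcand : forall k : Z, dot a (vsub c (vscale (IZR k) (coroot b))) <> 0 ->
            IZR k * IZR k - IZR k * IZR m < 0 ->
            exists c', coweight c' /\ dot a c' <> 0 /\ quad c' < quad c).
  { intros k Hk Hneg; exists (vsub c (vscale (IZR k) (coroot b))); repeat split; auto.
    - apply coweight_sub_mul; auto; apply coroot_coweight; auto.
    - rewrite quad_sub_coroot, Hm by auto; pose proof (quad_coroot_ge4 b Hb); nra. }
  assert (Ed : forall k, dot a (vsub c (vscale k (coroot b))) = dot a c - k * dot a (coroot b))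
    by (intros; rewrite dot_sub_r, dot_scale_r; auto).
  destruct (Z_le_gt_dec 0 m) as [Hpos|Hneg].
  - assert (H3 : 3 <= IZR m) by (apply IZR_le; lia).
    destruct (Req_dec (dot a c - 1 * dot a (coroot b)) 0);
      [apply (Hcand 2%Z) | apply (Hcand 1%Z)]; rewrite ?Ed; simpl; nra.
  - assert (H3 : IZR m <= -3) by (apply IZR_le; lia).
    destruct (Req_dec (dot a c - (-1) * dot a (coroot b)) 0);
      [apply (Hcand (-2)%Z) | apply (Hcand (-1)%Z)]; rewrite ?Ed; simpl; nra.
Qed.

End Quadratic.

Lemma exists_short_coweight a : In a Phi ->
  exists c, short_coweight c /\ dot a c <> 0.
Proof.
  intros Ha; destruct (nodup_enumeration Phi) as [L [HLnd HL]].
  set (P := fun N => exists c, coweight c /\ dot a c <> 0 /\ quad L c = INR N).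
  destruct (dec_inh_nat_subset_has_unique_least_element P (fun N => classic (P N)))
    as [N0 [[[c [Hc [Hac HQ]]] Hmin] _]].
  { destruct (quad_coweight_nat L HL (coroot a) (coroot_coweight a Ha)) as [N HN].
    exists N, (coroot a); rewrite dot_coroot_self by auto.
    split; [apply coroot_coweight; auto | split; [lra | auto]]. }
  exists c; split; auto; intros b Hb; destruct (Hc b Hb) as [m Hm].
  exists m; split; auto.
  destruct (Z_le_gt_dec 3 (Z.abs m)) as [Hbig|]; [exfalso|lia].
  destruct (coweight_reduce L HLnd HL a b c m Hc Hac Hb Hm Hbig) as [c' [Hc' [Hac' Hlt]]].
  destruct (quad_coweight_nat L HL c' Hc') as [M HM].
  assert (Hle : (N0 <= M)%nat) by (apply Hmin; exists c'; auto).
  apply le_INR in Hle; lra.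
Qed.

End ShortCoweight.

(** * Cells and closed stars *)

Section Closure.
Context {n : nat}.
Implicit Types (x y z b : vec n) (t : vec n -> Prop).

Lemma closure_dot_approx t y b g : in_closure t y -> 0 < g ->
  exists z, t z /\ Rabs (dot b (vsub y z)) < g.
Proof.
  intros Hc Hg; pose proof (dot_self_ge0 b) as HB.
  set (l := g / (dot b b + 1)).
  assert (Hl : 0 < l) by (apply Rdiv_lt_0_compat; lra).
  assert (HlB : l * dot b b < g).
  { unfold l; apply (Rmult_lt_reg_r (dot b b + 1)); [lra|].
    field_simplify; [|lra]. unfold Rdiv; nra. }
  set (eps := Rmin 1 (g * l / 2)).
  assert (He : 0 < eps) by (apply Rmin_pos; nra).
  destruct (Hc eps He) as [z [Hz Hn]]; exists z; split; auto.
  apply vnorm_lt_sqr in Hn.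
  assert (eps <= 1) by apply Rmin_l.
  assert (eps <= g * l / 2) by apply Rmin_r.
  assert (dot (vsub y z) (vsub y z) / l < g / 2).
  { apply (Rmult_lt_reg_r l); auto. field_simplify; nra. }
  pose proof (dot_amgm b (vsub y z) l Hl); lra.
Qed.

Lemma closure_dot_le t x b c : in_closure t x -> (forall z, t z -> dot b z <= c) ->
  dot b x <= c.
Proof.
  intros Hx Ht; apply Rnot_lt_le; intros Hc.
  destruct (closure_dot_approx t x b (dot b x - c) Hx) as [z [Hz Hd]]; [lra|].
  specialize (Ht z Hz); rewrite dot_sub_r in Hd; revert Hd; unfold Rabs.
  destruct Rcase_abs; lra.
Qed.

Lemma closure_dot_ge t x b c : in_closure t x -> (forall z, t z -> c <= dot b z) ->
  c <= dot b x.
Proof.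
  intros Hx Ht.
  assert (dot (vopp b) x <= - c) by (apply (closure_dot_le t); auto;
    intros z Hz; rewrite dot_opp_l; specialize (Ht z Hz); lra).
  rewrite dot_opp_l in *; lra.
Qed.

End Closure.

Definition wall_offset {n} (o a : vec n) (k : Z) (x : vec n) : R := dot a (vsub x o) - IZR k.

Section Cells.
Context {n : nat} (Phi : list (vec n)) (o : vec n).
Implicit Types (x y z b v : vec n) (s t : vec n -> Prop).

Lemma same_cell_refl x : same_cell Phi o x x.
Proof. intros b k _; tauto. Qed.

Lemma cell_wall_lt t b k z1 z2 : is_cell Phi o t -> In b Phi -> t z1 -> t z2 ->
  dot b (vsub z1 o) < IZR k -> dot b (vsub z2 o) < IZR k.
Proof.
  intros [x Ht] Hb H1 H2; apply Ht in H1, H2.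
  destruct (H1 b k Hb) as [L1 _], (H2 b k Hb) as [L2 _]; tauto.
Qed.

Lemma cell_wall_gt t b k z1 z2 : is_cell Phi o t -> In b Phi -> t z1 -> t z2 ->
  IZR k < dot b (vsub z1 o) -> IZR k < dot b (vsub z2 o).
Proof.
  intros [x Ht] Hb H1 H2; apply Ht in H1, H2.
  destruct (H1 b k Hb) as [L1 E1], (H2 b k Hb) as [L2 E2].
  destruct (Rtotal_order (dot b (vsub z2 o)) (IZR k)) as [C|[C|C]]; auto;
    [apply L2, L1 in C | apply E2, E1 in C]; lra.
Qed.

Lemma star_of_wall_cell a k s x : In a Phi -> is_cell Phi o s ->
  (forall y, s y -> on_wall o a k y) -> in_star Phi o s x -> Rabs (wall_offset o a k x) <= 1.
Proof.
  intros Ha [y0 Hs] Hwall [t [r [Ht [Hst [_ [Hrt Hrx]]]]]].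
  assert (Hy0 : s y0) by (apply Hs, same_cell_refl).
  specialize (Hwall y0 Hy0); unfold on_wall in Hwall.
  destruct (closure_dot_approx t y0 a 1 (Hst y0 Hy0)) as [z' [Hz' Hd]]; [lra|].
  rewrite dot_sub_r in Hd.
  replace (dot a y0) with (IZR k + dot a o) in Hd by (rewrite dot_sub_r in Hwall; lra).
  assert (Hup : forall z, t z -> dot a (vsub z o) < IZR (k + 1)).
  { intros z Hz; apply (cell_wall_lt t a _ z'); auto.
    rewrite plus_IZR, dot_sub_r; revert Hd; unfold Rabs; destruct Rcase_abs; lra. }
  assert (Hlo : forall z, t z -> IZR (k - 1) < dot a (vsub z o)).
  { intros z Hz; apply (cell_wall_gt t a _ z'); auto.
    rewrite minus_IZR, dot_sub_r; revert Hd; unfold Rabs; destruct Rcase_abs; lra. }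
  rewrite plus_IZR in Hup; rewrite minus_IZR in Hlo.
  assert (dot a x <= IZR k + 1 + dot a o).
  { apply (closure_dot_le t); [apply Hrt; auto|].
    intros z Hz; specialize (Hup z Hz); rewrite dot_sub_r in Hup; lra. }
  assert (IZR k - 1 + dot a o <= dot a x).
  { apply (closure_dot_ge t); [apply Hrt; auto|].
    intros z Hz; specialize (Hlo z Hz); rewrite dot_sub_r in Hlo; lra. }
  unfold wall_offset; rewrite dot_sub_r; unfold Rabs; destruct Rcase_abs; lra.
Qed.

(* A combinatorial criterion for [y] to lie in the closure of the cell of [x]:
   every wall inequality satisfied by [x] holds at [y] at least weakly. *)
Definition weakly_in_cell x y : Prop := forall b (k : Z), In b Phi ->
  (dot b (vsub x o) < IZR k -> dot b (vsub y o) <= IZR k) /\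
  (dot b (vsub x o) = IZR k -> dot b (vsub y o) = IZR k) /\
  (IZR k < dot b (vsub x o) -> IZR k <= dot b (vsub y o)).

(* Points of the half-open segment from [y] to [x], close to [y], lie in the cell of [x]. *)
Lemma weakly_in_cell_closure x y : weakly_in_cell x y -> in_closure (same_cell Phi o x) y.
Proof.
  intros Hw eps He; set (N := vnorm (vsub y x)); pose proof (vnorm_ge0 (vsub y x)).
  set (e := Rmin 1 (eps / (2 * (N + 1)))).
  assert (Hp : 0 < e) by (apply Rmin_pos; [lra | apply Rdiv_lt_0_compat; unfold N; lra]).
  assert (He1 : e <= 1) by apply Rmin_l.
  assert (He2 : e <= eps / (2 * (N + 1))) by apply Rmin_r.
  exists (vadd y (vscale e (vsub x y))); split.
  - intros b k Hb; destruct (Hw b k Hb) as [H1 [H2 H3]].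
    replace (vsub (vadd y (vscale e (vsub x y))) o)
      with (vadd (vscale (1 - e) (vsub y o)) (vscale e (vsub x o))) by vec_ring.
    rewrite dot_add_r, !dot_scale_r.
    destruct (Rtotal_order (dot b (vsub x o)) (IZR k)) as [Hx|[Hx|Hx]];
      [specialize (H1 Hx) | specialize (H2 Hx) | specialize (H3 Hx)];
      split; split; intros; nra.
  - replace (vsub y (vadd y (vscale e (vsub x y)))) with (vscale e (vsub y x)) by vec_ring.
    rewrite vnorm_scale by lra; fold N.
    assert (e * N <= eps / (2 * (N + 1)) * N) by (unfold N in *; nra).
    assert (eps / (2 * (N + 1)) * N < eps).
    { apply (Rmult_lt_reg_r (2 * (N + 1))); [unfold N; lra|].
      field_simplify; unfold N in *; nra. }
    lra.
Qed.

Lemma weakly_in_cell_same_cell x y0 y :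
  weakly_in_cell x y0 -> same_cell Phi o y0 y -> weakly_in_cell x y.
Proof.
  intros Hw Hs b k Hb; destruct (Hw b k Hb) as [H1 [H2 H3]].
  destruct (Hs b k Hb) as [[A1 A2] [B1 B2]].
  split; [|split]; intros H.
  - destruct (H1 H) as [C|C]; [left; apply A1 | right; apply B1]; auto.
  - apply B1, H2, H.
  - destruct (H3 H) as [C|C]; [|right; symmetry; apply B1; auto].
    left; destruct (Rtotal_order (dot b (vsub y o)) (IZR k)) as [D|[D|D]]; auto;
      [apply A2 in D | apply B2 in D]; lra.
Qed.

Lemma in_star_of_weakly_in_cell S y0 x1 v : (forall y, S y -> same_cell Phi o y0 y) ->
  weakly_in_cell x1 y0 -> weakly_in_cell x1 v -> is_vertex Phi o v -> in_star Phi o S v.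
Proof.
  intros HS H1 H2 Hv.
  exists (same_cell Phi o x1), (fun y => y = v); repeat split; auto.
  - exists x1; tauto.
  - intros y Hy; apply weakly_in_cell_closure, (weakly_in_cell_same_cell _ y0); auto.
  - intros y ->; apply weakly_in_cell_closure; auto.
Qed.

Lemma vertex_of_coweight v : is_root_system Phi -> coweight Phi (vsub v o) -> is_vertex Phi o v.
Proof.
  intros [_ [_ [_ Hspan]]] Hint; exists v; intros y; split.
  - intros ->; apply same_cell_refl.
  - intros Hs; assert (E : vsub y v = vzero).
    { apply Hspan; intros b Hb; destruct (Hint b Hb) as [m Hm].
      destruct (Hs b m Hb) as [_ [A _]]; specialize (A Hm).
      replace (vsub y v) with (vsub (vsub y o) (vsub v o)) by vec_ring.
      rewrite dot_sub_r; lra. }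
    vec_ext; assert (Ex := f_equal (fun f => f x) E); simpl in Ex.
    unfold vsub, vadd, vopp, vzero in Ex; lra.
Qed.

End Cells.

Section Richness.
Context {n : nat} (Phi : list (vec n)) (o : vec n).
Hypothesis HPhi : is_root_system Phi.

(* Along the segment [o + r c], a root [b] takes the values [r <b,c>] with
   [|<b,c>| <= 2]; at quarter points the wall conditions become integer
   arithmetic after multiplying by 4. *)
Lemma weakly_in_cell_quarters c r1 r2 (p q : Z) : short_coweight Phi c ->
  4 * r1 = IZR p -> 4 * r2 = IZR q ->
  (forall z k : Z, (-2 <= z <= 2)%Z ->
     (p * z < 4 * k -> q * z <= 4 * k)%Z /\ (p * z = 4 * k -> q * z = 4 * k)%Z /\
     (4 * k < p * z -> 4 * k <= q * z)%Z) ->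
  weakly_in_cell Phi o (vadd o (vscale r1 c)) (vadd o (vscale r2 c)).
Proof.
  intros Hc Hp Hq Hpq b k Hb; destruct (Hc b Hb) as [z [Hz Hz2]].
  destruct (Hpq z k Hz2) as [H1 [H2 H3]].
  assert (E : forall r, dot b (vsub (vadd o (vscale r c)) o) = r * IZR z).
  { intros r; replace (vsub (vadd o (vscale r c)) o) with (vscale r c) by vec_ring.
    rewrite dot_scale_r, Hz; ring. }
  rewrite !E.
  assert (Ep : 4 * (r1 * IZR z) = IZR (p * z)) by (rewrite mult_IZR, <- Hp; ring).
  assert (Eq : 4 * (r2 * IZR z) = IZR (q * z)) by (rewrite mult_IZR, <- Hq; ring).
  assert (Ek : 4 * IZR k = IZR (4 * k)) by (rewrite mult_IZR; ring).
  split; [|split]; intros H.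
  - assert (IZR (q * z) <= IZR (4 * k)) by (apply IZR_le, H1, lt_IZR; lra); lra.
  - assert (IZR (q * z) = IZR (4 * k)) by (f_equal; apply H2, eq_IZR; lra); lra.
  - assert (IZR (4 * k) <= IZR (q * z)) by (apply IZR_le, H3, lt_IZR; lra); lra.
Qed.

(* The vertices [o] and [o + c] both lie in the star of the cell of [o + c/2]:
   witnessed by the cells of [o + c/4] and [o + 3c/4] respectively. *)
Lemma short_coweight_in_rich {S : Type} (i : S -> vec n) (j : vec n -> S) D c :
  (forall y, i (j y) = y) -> rich Phi o i D -> short_coweight Phi c -> c <> vzero -> In c D.
Proof.
  intros Hij Hrich Hc Hc0; set (pt := fun r => vadd o (vscale r c)).
  assert (Hvert : forall r, r = 0 \/ r = 1 -> is_vertex Phi o (pt r)).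
  { intros r Hr; apply vertex_of_coweight; auto; intros b Hb.
    destruct (Hc b Hb) as [m [Hm _]]; unfold pt.
    replace (vsub (vadd o (vscale r c)) o) with (vscale r c) by vec_ring.
    rewrite dot_scale_r, Hm; destruct Hr as [-> | ->]; [exists 0%Z | exists m]; ring. }
  set (s := fun x => same_cell Phi o (pt (1 / 2)) (i x)).
  assert (Himg : forall y, image i s y -> same_cell Phi o (pt (1 / 2)) y)
    by (intros y [x [hx <-]]; auto).
  assert (Hcell : S_cell Phi o i s).
  { exists (pt (1 / 2)); intros y; split; auto.
    intros hy; exists (j y); unfold s; rewrite Hij; auto. }
  replace c with (vsub (pt 1) (pt 0)) by (unfold pt; vec_ring).
  pose proof (Hrich s (j (pt 1)) (j (pt 0)) Hcell) as H; unfold S_vertex, S_star in H.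
  rewrite !Hij in H; apply H; auto.
  - intros E; apply (f_equal i) in E; rewrite !Hij in E; apply Hc0.
    replace c with (vsub (pt 1) (pt 0)) by (unfold pt; vec_ring); rewrite E; vec_ring.
  - apply (in_star_of_weakly_in_cell Phi o _ (pt (1 / 2)) (pt (3 / 4))); auto.
    + apply (weakly_in_cell_quarters c _ _ 3 2); auto; try lra; intros; repeat split; intros; lia.
    + apply (weakly_in_cell_quarters c _ _ 3 4); auto; try lra; intros; repeat split; intros; lia.
  - apply (in_star_of_weakly_in_cell Phi o _ (pt (1 / 2)) (pt (1 / 4))); auto.
    + apply (weakly_in_cell_quarters c _ _ 1 2); auto; try lra; intros; repeat split; intros; lia.
    + apply (weakly_in_cell_quarters c _ _ 1 0); auto; try lra; intros; repeat split; intros; lia.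
Qed.

End Richness.

(** * The zonotope *)

Section Zonotope.
Context {n : nat} (S : vec n -> Prop).
Implicit Types (x y z e : vec n) (L : list (vec n)) (g : vec n -> R).

Definition enumerates L : Prop := NoDup L /\ forall x, In x L <-> S x.

Lemma in_zonotope_vsum L g : enumerates L -> (forall x, 0 <= g x <= 1) ->
  in_zonotope S (vsum L (fun x => vscale (g x) x)).
Proof. intros [Hnd HL] Hg; exists L; split; [|split]; auto; exists g; auto. Qed.

Lemma zonotope_zero L : enumerates L -> in_zonotope S vzero.
Proof.
  intros HL; replace vzero with (vsum L (fun x => vscale 0 x)).
  - apply in_zonotope_vsum; auto; intros; lra.
  - apply vsum_zero; intros; vec_ring.
Qed.

(* Averaging the weights of [x] and [s x] represents the midpoint of [z] and [s z]. *)
Lemma zonotope_symmetric_weights (s : vec n -> vec n) z :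
  s vzero = vzero -> (forall x y, s (vadd x y) = vadd (s x) (s y)) ->
  (forall c x, s (vscale c x) = vscale c (s x)) -> (forall x, s (s x) = x) ->
  (forall x, S x -> S (s x)) -> in_zonotope S z ->
  exists L g, enumerates L /\ (forall x, 0 <= g x <= 1) /\ (forall x, g (s x) = g x) /\
    vsum L (fun x => vscale (g x) x) = vscale (1 / 2) (vadd z (s z)).
Proof.
  intros Hs0 Hsadd Hsscale Hinv HsS [L [Hnd [HL [t [Ht Hz]]]]].
  change (z = vsum L (fun x => vscale (t x) x)) in Hz.
  assert (Hperm : Permutation L (map s L)).
  { apply Permutation_map_involution; auto; intros x Hx; apply HL, HsS, HL; auto. }
  assert (Hsz : s z = vsum L (fun x => vscale (t (s x)) x)).
  { rewrite Hz, vsum_additive, (vsum_perm _ _ _ Hperm), vsum_map by auto.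
    apply vsum_ext; intros x _; rewrite Hsscale, Hinv; auto. }
  exists L, (fun x => (t x + t (s x)) / 2); split; [split; auto|]; split; [|split].
  - intros x; pose proof (Ht x); pose proof (Ht (s x)); lra.
  - intros x; rewrite Hinv; lra.
  - rewrite Hsz, Hz at 1; rewrite <- vsum_add, <- vsum_scale.
    apply vsum_ext; intros; vec_ext; unfold vadd, vscale; field.
Qed.

(* With equal weights on [e] and [-e], they contribute [0]; reweighting them as
   [(1 + gam)/2] and [(1 - gam)/2] adds [gam e]. *)
Lemma zonotope_add_segment L g e gam : enumerates L -> (forall x, 0 <= g x <= 1) ->
  S e -> S (vopp e) -> e <> vopp e -> g e = g (vopp e) -> -1 <= gam <= 1 ->
  in_zonotope S (vadd (vsum L (fun x => vscale (g x) x)) (vscale gam e)).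
Proof.
  intros [Hnd HL] Hg He Hme Hne Hge Hgam.
  set (g' := fun x => if excluded_middle_informative (x = e) then (1 + gam) / 2
              else if excluded_middle_informative (x = vopp e) then (1 - gam) / 2 else g x).
  set (F1 := fun x => if excluded_middle_informative (x = e)
                      then vscale ((1 + gam) / 2 - g x) x else vzero).
  set (F2 := fun x => if excluded_middle_informative (x = vopp e)
                      then vscale ((1 - gam) / 2 - g x) x else vzero).
  assert (Hsplit : vsum L (fun x => vscale (g' x) x)
                   = vadd (vsum L (fun x => vscale (g x) x)) (vadd (vsum L F1) (vsum L F2))).
  { rewrite <- !vsum_add; apply vsum_ext; intros x _; unfold g', F1, F2.
    destruct (excluded_middle_informative (x = e)) as [->|h1];
      destruct (excluded_middle_informative (e = vopp e)); try contradiction;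
      try destruct (excluded_middle_informative (x = vopp e)) as [->|h2]; vec_ring. }
  assert (HF1 : vsum L F1 = vscale ((1 + gam) / 2 - g e) e).
  { rewrite (vsum_single _ _ e); auto; [| apply HL; auto |].
    - unfold F1; destruct (excluded_middle_informative (e = e)); [auto | contradiction].
    - intros x hx; unfold F1; destruct (excluded_middle_informative (x = e)); tauto. }
  assert (HF2 : vsum L F2 = vscale ((1 - gam) / 2 - g e) (vopp e)).
  { rewrite (vsum_single _ _ (vopp e)); auto; [| apply HL; auto |].
    - unfold F2; destruct (excluded_middle_informative (vopp e = vopp e)); [|contradiction].
      rewrite Hge; auto.
    - intros x hx; unfold F2; destruct (excluded_middle_informative (x = vopp e)); tauto. }
  replace (vadd (vsum L (fun x => vscale (g x) x)) (vscale gam e))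
    with (vsum L (fun x => vscale (g' x) x))
    by (rewrite Hsplit, HF1, HF2; vec_ext; unfold vsub, vadd, vscale, vopp; field).
  apply in_zonotope_vsum; [split; auto|].
  intros x; pose proof (Hg x); unfold g'.
  destruct (excluded_middle_informative (x = e)); [lra|].
  destruct (excluded_middle_informative (x = vopp e)); lra.
Qed.

End Zonotope.

Lemma is_inf_exists (A : R -> Prop) : (exists r, A r) -> (forall r, A r -> 0 <= r) ->
  exists m, is_inf A m.
Proof.
  intros Hne Hpos; destruct (completeness (fun x => A (- x))) as [l [Hub Hlub]].
  - exists 0; intros x Hx; apply Hpos in Hx; lra.
  - destruct Hne as [r Hr]; exists (- r); rewrite Ropp_involutive; auto.
  - exists (- l); split.
    + intros r Hr; assert (- r <= l) by (apply Hub; rewrite Ropp_involutive; auto); lra.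
    + intros m' Hm'; assert (l <= - m') by (apply Hlub; intros x Hx; apply Hm' in Hx; lra); lra.
Qed.

Lemma is_inf_eq A1 A2 m1 m2 : is_inf A1 m1 -> is_inf A2 m2 ->
  (forall r1, A1 r1 -> exists r2, A2 r2 /\ r2 <= r1) ->
  (forall r2, A2 r2 -> exists r1, A1 r1 /\ r1 <= r2) -> m1 = m2.
Proof.
  intros [L1 G1] [L2 G2] H12 H21.
  assert (m2 <= m1) by (apply G1; intros r1 h; destruct (H12 r1 h) as [r2 [h2 le]];
    apply L2 in h2; lra).
  assert (m1 <= m2) by (apply G2; intros r2 h; destruct (H21 r2 h) as [r1 [h1 le]];
    apply L1 in h1; lra).
  lra.
Qed.

Section Slab.
Context {n : nat} (Phi D : list (vec n)) (a : vec n).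
Hypothesis HW : W_invariant Phi D.
Hypothesis Hsym : symmetric_set D.
Hypothesis Ha : In a Phi.
Hypothesis Haa : dot a a <> 0.

Lemma W_invariant_lin_refl d : In d D -> In (lin_refl a d) D.
Proof.
  intros Hd; apply (HW (lin_refl a)); auto.
  exists (a :: nil); split; [constructor; auto | reflexivity].
Qed.

Lemma DDuD_lin_refl z : DDuD D z -> DDuD D (lin_refl a z).
Proof.
  intros [H|[d1 [d2 [H1 [H2 ->]]]]]; [left; apply W_invariant_lin_refl; auto|].
  right; exists (lin_refl a d1), (lin_refl a d2).
  repeat split; try apply W_invariant_lin_refl; auto; apply lin_refl_add.
Qed.

Lemma DDuD_enumeration : exists L, enumerates (DDuD D) L.
Proof.
  destruct (nodup_enumeration (D ++ flat_map (fun d1 => map (vadd d1) D) D)) as [L [HL HI]].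
  exists L; split; auto; intros z; rewrite HI, in_app_iff, in_flat_map; unfold DDuD.
  split.
  - intros [h|[d1 [h1 h2]]]; [left; auto|]; rewrite in_map_iff in h2.
    destruct h2 as [d2 [<- h2]]; right; exists d1, d2; auto.
  - intros [h|[d1 [d2 [h1 [h2 ->]]]]]; [left; auto|]; right; exists d1; split; auto.
    apply in_map; auto.
Qed.

(* [d - s_a d = m a] and [s_a d - d] lie in [D + D], so the zonotope contains
   the segment [-m a, m a] over the orthogonal projection of each of its points. *)
Lemma zonotope_slab d z beta : In d D -> dot d a <> 0 -> in_zonotope (DDuD D) z ->
  Rabs beta <= Rabs (2 * dot d a / dot a a) ->
  in_zonotope (DDuD D) (vadd (vsub z (vscale (dot a z / dot a a) a)) (vscale beta a)).
Proof.
  intros Hd Hda Hz Hb; set (m := 2 * dot d a / dot a a) in *.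
  assert (Hm : m <> 0).
  { intros E; apply Hda; replace (dot d a) with (m * dot a a / 2) by (unfold m; field; auto).
    rewrite E; lra. }
  set (e := vscale m a).
  assert (He : e = vsub d (lin_refl a d))
    by (unfold e, m, lin_refl; vec_ext; unfold vsub, vadd, vscale, vopp; field; auto).
  assert (HeD : DDuD D e).
  { right; exists d, (vopp (lin_refl a d)); repeat split; auto.
    apply Hsym, W_invariant_lin_refl; auto. }
  assert (HmeD : DDuD D (vopp e)).
  { right; exists (vopp d), (lin_refl a d); repeat split; auto;
      [apply W_invariant_lin_refl; auto | rewrite He; vec_ring]. }
  assert (Hne : e <> vopp e).
  { intros E; assert (Hee : dot e e = - dot e e) by (rewrite E at 2; apply dot_opp_r).
    unfold e in Hee; rewrite dot_scale_l, dot_scale_r in Hee.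
    assert (Hmm : m * m * dot a a = 0) by lra.
    destruct (Rmult_integral _ _ Hmm) as [Hm2|]; auto; destruct (Rmult_integral _ _ Hm2); auto. }
  destruct (zonotope_symmetric_weights (DDuD D) (lin_refl a) z) as [L [g [HL [Hg [Hgs Hsum]]]]];
    auto using lin_refl_zero, lin_refl_add, lin_refl_scale, lin_refl_involutive, DDuD_lin_refl.
  assert (Hge : g e = g (vopp e)).
  { rewrite <- (Hgs e); unfold e; rewrite lin_refl_parallel by auto.
    f_equal; vec_ring. }
  assert (Hgam : -1 <= beta / m <= 1).
  { assert (0 < Rabs m) by (apply Rabs_pos_lt; auto).
    assert (Habs : Rabs (beta / m) <= 1).
    { unfold Rdiv; rewrite Rabs_mult, Rabs_inv.
      apply (Rmult_le_reg_r (Rabs m)); auto; field_simplify; lra. }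
    revert Habs; unfold Rabs; destruct Rcase_abs; lra. }
  replace (vadd (vsub z (vscale (dot a z / dot a a) a)) (vscale beta a))
    with (vadd (vsum L (fun x => vscale (g x) x)) (vscale (beta / m) e)).
  - apply zonotope_add_segment; auto.
  - rewrite Hsum; unfold e, lin_refl; rewrite dot_comm.
    vec_ext; unfold vsub, vadd, vscale, vopp; field; auto.
Qed.

End Slab.

Section Distance.
Context {n : nat} (Phi D : list (vec n)) (a d : vec n).
Hypothesis HW : W_invariant Phi D.
Hypothesis Hsym : symmetric_set D.
Hypothesis Ha : In a Phi.
Hypothesis Haa : dot a a <> 0.
Hypothesis Hd : In d D.
Hypothesis Hda : 1 <= Rabs (dot d a).

Lemma dist_zonotope_is_inf u :
  is_inf (fun r => exists z, in_zonotope (DDuD D) z /\ r = vnorm (vsub u z))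
         (dist_set u (in_zonotope (DDuD D))).
Proof.
  unfold dist_set; apply epsilon_spec, is_inf_exists.
  - destruct (DDuD_enumeration D) as [L HL].
    exists (vnorm (vsub u vzero)), vzero; split; auto; apply (zonotope_zero _ L HL).
  - intros r [z [_ ->]]; apply vnorm_ge0.
Qed.

(* Moving the [a]-component of [z] to that of [u] stays in the zonotope by
   [zonotope_slab] and leaves only the orthogonal part of [u - z]. *)
Lemma zonotope_closer u1 gam z : Rabs (dot a (vadd u1 (vscale gam a))) <= 2 ->
  in_zonotope (DDuD D) z -> exists z', in_zonotope (DDuD D) z' /\
    vnorm (vsub (vadd u1 (vscale gam a)) z') <= vnorm (vsub u1 z).
Proof.
  intros Hb Hz; set (u2 := vadd u1 (vscale gam a)) in *.
  assert (Hpos : 0 < dot a a) by (pose proof (dot_self_ge0 a); lra).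
  set (beta := dot a u2 / dot a a).
  set (z' := vadd (vsub z (vscale (dot a z / dot a a) a)) (vscale beta a)).
  exists z'; split.
  - apply (zonotope_slab Phi D a HW Hsym Ha Haa d); auto.
    + intros E; rewrite E, Rabs_R0 in Hda; lra.
    + unfold beta, Rdiv; rewrite !Rabs_mult, (Rabs_right 2) by lra.
      apply Rmult_le_compat_r; [apply Rabs_pos | lra].
  - apply vnorm_le; set (w := vsub u2 z').
    assert (Hw : dot w a = 0).
    { unfold w, z', beta; rewrite dot_sub_l, dot_add_l, dot_sub_l, !dot_scale_l,
        (dot_comm u2 a), (dot_comm z a); field; auto. }
    set (del := beta - dot a z / dot a a - gam).
    replace (vsub u1 z) with (vadd w (vscale del a))
      by (unfold w, z', u2, del; vec_ring).
    rewrite dot_add_l, !dot_add_r, !dot_scale_l, !dot_scale_r, (dot_comm a w), Hw.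
    pose proof (Rle_0_sqr del); unfold Rsqr in *; nra.
Qed.

Lemma dist_zonotope_shift u gam : Rabs (dot a u) <= 2 ->
  Rabs (dot a (vadd u (vscale gam a))) <= 2 ->
  dist_set (vadd u (vscale gam a)) (in_zonotope (DDuD D)) = dist_set u (in_zonotope (DDuD D)).
Proof.
  intros H1 H2; apply (is_inf_eq _ _ _ _ (dist_zonotope_is_inf _) (dist_zonotope_is_inf u)).
  - intros r [z [Hz ->]].
    assert (Eu : vadd (vadd u (vscale gam a)) (vscale (- gam) a) = u) by vec_ring.
    rewrite <- Eu in H1; destruct (zonotope_closer _ _ z H1 Hz) as [z' [Hz' Hle]].
    rewrite Eu in Hle; eauto.
  - intros r [z [Hz ->]]; destruct (zonotope_closer _ _ z H2 Hz) as [z' [Hz' Hle]]; eauto.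
Qed.

End Distance.

(** * Reflection in a wall *)

Section WallReflection.
Context {n : nat} (Phi D : list (vec n)) (o a d : vec n) (k : Z).
Hypothesis HW : W_invariant Phi D.
Hypothesis Hsym : symmetric_set D.
Hypothesis Ha : In a Phi.
Hypothesis Haa : dot a a <> 0.
Hypothesis Hd : In d D.
Hypothesis Hda : 1 <= Rabs (dot d a).

Lemma dot_sub_wall_offset p q : dot a (vsub p q) = wall_offset o a k p - wall_offset o a k q.
Proof.
  unfold wall_offset; replace (vsub p q) with (vsub (vsub p o) (vsub q o)) by vec_ring.
  rewrite dot_sub_r; ring.
Qed.

Lemma dist_aff_refl_l p q :
  Rabs (wall_offset o a k p) <= 1 -> Rabs (wall_offset o a k q) <= 1 ->
  dist_set (vsub (aff_refl o a k p) q) (in_zonotope (DDuD D))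
  = dist_set (vsub p q) (in_zonotope (DDuD D)).
Proof.
  intros Hp Hq.
  replace (vsub (aff_refl o a k p) q)
    with (vadd (vsub p q) (vscale (- (2 * wall_offset o a k p / dot a a)) a))
    by (unfold aff_refl, wall_offset; vec_ext; unfold vsub, vadd, vscale, vopp; field; auto).
  apply (dist_zonotope_shift Phi D a d); auto;
    rewrite ?dot_add_r, ?dot_scale_r, dot_sub_wall_offset.
  - revert Hp Hq; unfold Rabs; do 3 destruct Rcase_abs; lra.
  - replace (- (2 * wall_offset o a k p / dot a a) * dot a a) with (- (2 * wall_offset o a k p))
      by (field; auto).
    revert Hp Hq; unfold Rabs; do 3 destruct Rcase_abs; lra.
Qed.

Lemma dist_aff_refl_r p q :
  Rabs (wall_offset o a k p) <= 1 -> Rabs (wall_offset o a k q) <= 1 ->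
  dist_set (vsub p (aff_refl o a k q)) (in_zonotope (DDuD D))
  = dist_set (vsub p q) (in_zonotope (DDuD D)).
Proof.
  intros Hp Hq.
  replace (vsub p (aff_refl o a k q))
    with (vadd (vsub p q) (vscale (2 * wall_offset o a k q / dot a a) a))
    by (unfold aff_refl, wall_offset; vec_ext; unfold vsub, vadd, vscale, vopp; field; auto).
  apply (dist_zonotope_shift Phi D a d); auto;
    rewrite ?dot_add_r, ?dot_scale_r, dot_sub_wall_offset.
  - revert Hp Hq; unfold Rabs; do 3 destruct Rcase_abs; lra.
  - replace (2 * wall_offset o a k q / dot a a * dot a a) with (2 * wall_offset o a k q)
      by (field; auto).
    revert Hp Hq; unfold Rabs; do 3 destruct Rcase_abs; lra.
Qed.

End WallReflection.

Theorem mainTheorem19 (n : nat) (Phi : list (vec n)) (o : vec n)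
  (Sp Sm : Type) (ip : Sp -> vec n) (jp : vec n -> Sp)
  (im : Sm -> vec n) (jm : vec n -> Sm) (op : Sp -> Sm)
  (D : list (vec n)) (sp : Sp -> Prop) (sm : Sm -> Prop) (a : vec n) (k : Z) :
  is_root_system Phi ->
  (forall x, jp (ip x) = x) -> (forall y, ip (jp y) = y) ->
  (forall x, jm (im x) = x) -> (forall y, im (jm y) = y) ->
  (forall x, ip x = im (op x)) ->
  W_invariant Phi D -> symmetric_set D -> rich Phi o ip D ->
  S_cell Phi o ip sp -> S_cell Phi o im sm ->
  In a Phi ->
  (forall x, sp x -> on_wall o a k (ip x)) ->
  (forall x, sm x -> on_wall o a k (im x)) ->
  (forall xp xm, S_star Phi o ip sp xp -> S_star Phi o im sm xm ->
     height D ip im (jp (aff_refl o a k (ip xp))) xm = height D ip im xp xm) /\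
  (forall xp xm, S_star Phi o ip sp xp -> S_star Phi o im sm xm ->
     height D ip im xp (jm (aff_refl o a k (im xm))) = height D ip im xp xm).
Proof.
  intros HPhi _ Hpj _ Hmj _ HW Hsym Hrich Hsp Hsm Ha Hwp Hwm.
  pose proof (root_dot_self_neq0 Phi HPhi a Ha) as Haa.
  destruct (exists_short_coweight Phi HPhi a Ha) as [c [Hc Hac]].
  assert (HcD : In c D).
  { apply (short_coweight_in_rich Phi o HPhi ip jp); auto.
    intros ->; apply Hac, dot_zero_r. }
  assert (Hca : 1 <= Rabs (dot c a)).
  { destruct (Hc a Ha) as [m [Hm _]]; rewrite dot_comm, Hm, Rabs_Zabs.
    rewrite Hm in Hac; assert (m <> 0%Z) by (intros ->; auto).
    apply IZR_le; lia. }
  assert (Hp : forall xp, S_star Phi o ip sp xp -> Rabs (wall_offset o a k (ip xp)) <= 1).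
  { intros xp; apply (star_of_wall_cell Phi o); auto; intros y [x [Hx <-]]; auto. }
  assert (Hm : forall xm, S_star Phi o im sm xm -> Rabs (wall_offset o a k (im xm)) <= 1).
  { intros xm; apply (star_of_wall_cell Phi o); auto; intros y [x [Hx <-]]; auto. }
  split; intros xp xm Hxp Hxm; unfold height; rewrite ?Hpj, ?Hmj.
  - apply (dist_aff_refl_l Phi D o a c k); auto.
  - apply (dist_aff_refl_r Phi D o a c k); auto.
Qed.
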